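(* Let $H \geq 1$ be a real number, let $m = p/q$ be a rational number with $p, q$ integers and $q > 0$, and let $c_1, c_2, c_3$ be integers with $c_1 \neq 0$, $c_3 \geq 0$ and $(c_1, c_2) = 1$. Suppose that there are at least three integer points $(x,y) \in \mathbb{Z}^2$ with $|x| \leq H$, $|y| \leq H$ lying on the circle \[ (c_1 X - c_2)^2 + (c_1 Y - m c_2)^2 = c_3 . \] Then \[ |c_1| \leq 4q(1+|m|)H, \qquad |c_2| \leq 2qH^2, \qquad c_3 \leq 36 q^2 (1+|m|)^2 H^4 . \]
   Context: For integers $a, b$, the notation $(a,b) = 1$ means: either one of $a, b$ equals $1$ and the other equals $0$, or $a$ and $b$ are both nonzero and coprime. *)

From Stdlib Require Import Reals ZArith.
Open Scope R_scope.

(* The paper's convention: (a,b) = 1 means either one of a, b equals 1 and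
   the other equals 0, or a and b are both nonzero and coprime. *)
Definition coprime_pair (a b : Z) : Prop :=
  ((a = 1 /\ b = 0) \/ (a = 0 /\ b = 1))%Z \/
  (a <> 0%Z /\ b <> 0%Z /\ Z.gcd a b = 1%Z).

Definition on_circle (m : R) (c1 c2 c3 : Z) (x y : Z) : Prop :=
  (IZR c1 * IZR x - IZR c2) ^ 2 + (IZR c1 * IZR y - m * IZR c2) ^ 2 = IZR c3.

Definition in_box (H : R) (x y : Z) : Prop :=
  Rabs (IZR x) <= H /\ Rabs (IZR y) <= H.

From Stdlib Require Import Reals ZArith Znumtheory Lia Lra Psatz.
Open Scope R_scope.

(* Multiplying the circle equation by q^2 turns it into the integer equation
   (q c1 x - q c2)^2 + (q c1 y - p c2)^2 = q^2 c3.  Subtracting it at two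
   points P = (x,y), P' = (X,Y) gives the chord relation
        q c1 D = 2 c2 L,   D = |P|^2 - |P'|^2,   L = q (x - X) + p (y - Y).
   As gcd(c1,c2) = 1, c1 divides 2L and c2 divides qD, so |c1| <= 2|L| when
   L <> 0 and |c2| <= q|D| when D <> 0.  Solving for the centre also gives
   c3 <= |P - P'|^2 ((q (y+Y) - p (x+X))^2 + L^2) when L <> 0.
   Among three distinct points on the circle some chord has L <> 0 (otherwise
   the three points would lie on one line and one circle centred at the
   origin); for that chord D <> 0 too unless c2 = 0.  The three bounds then
   follow from elementary estimates of L, D and the product above for
   points in the box [-H, H]^2, using q (1 + |p/q|) = q + |p|. *)

Local Open Scope Z_scope.

Definition scaled_circle (p q c1 c2 c3 x y : Z) : Prop :=
  (q*c1*x - q*c2)^2 + (q*c1*y - p*c2)^2 = q^2*c3.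

Section Chord.

Variables p q c1 c2 c3 : Z.
Hypothesis hq : q <> 0.
Hypothesis hc1 : c1 <> 0.

Lemma chord_relation x y X Y :
  scaled_circle p q c1 c2 c3 x y -> scaled_circle p q c1 c2 c3 X Y ->
  q*c1*(x^2+y^2-X^2-Y^2) = 2*c2*(q*(x-X)+p*(y-Y)).
Proof.
  unfold scaled_circle; intros E1 E2.
  assert (Hprod : (q*c1) * (q*c1*(x^2+y^2-X^2-Y^2) - 2*c2*(q*(x-X)+p*(y-Y))) = 0).
  { transitivity (((q*c1*x - q*c2)^2 + (q*c1*y - p*c2)^2)
                  - ((q*c1*X - q*c2)^2 + (q*c1*Y - p*c2)^2)); [ring|].
    rewrite E1, E2; ring. }
  apply Z.mul_eq_0 in Hprod as [Hqc|Hdiff].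
  - apply Z.mul_eq_0 in Hqc as [|]; contradiction.
  - now apply Zminus_eq.
Qed.

Lemma chord_equal_norms x y X Y :
  scaled_circle p q c1 c2 c3 x y -> scaled_circle p q c1 c2 c3 X Y ->
  q*(x-X)+p*(y-Y) = 0 -> x^2+y^2-X^2-Y^2 = 0.
Proof.
  intros E1 E2 hL.
  pose proof (chord_relation x y X Y E1 E2) as R.
  rewrite hL, Z.mul_0_r in R.
  apply Z.mul_eq_0 in R as [Hqc|HD]; [|exact HD].
  apply Z.mul_eq_0 in Hqc as [|]; contradiction.
Qed.

Lemma chord_distinct_norms x y X Y : c2 <> 0 ->
  scaled_circle p q c1 c2 c3 x y -> scaled_circle p q c1 c2 c3 X Y ->
  q*(x-X)+p*(y-Y) <> 0 -> x^2+y^2-X^2-Y^2 <> 0.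
Proof.
  intros hc2 E1 E2 hL HD.
  pose proof (chord_relation x y X Y E1 E2) as R.
  rewrite HD, Z.mul_0_r in R.
  symmetry in R; apply Z.mul_eq_0 in R as [Hc2|]; [|contradiction].
  apply Z.mul_eq_0 in Hc2 as [|]; [discriminate|contradiction].
Qed.

Hypothesis hgcd : Z.gcd c1 c2 = 1.

(* c1 divides 2L, hence is bounded by it when L is nonzero. *)
Lemma c1_le_chord x y X Y :
  scaled_circle p q c1 c2 c3 x y -> scaled_circle p q c1 c2 c3 X Y ->
  q*(x-X)+p*(y-Y) <> 0 ->
  Z.abs c1 <= 2 * Z.abs (q*(x-X)+p*(y-Y)).
Proof.
  intros E1 E2 hL.
  pose proof (chord_relation x y X Y E1 E2) as R; clear E1 E2.
  set (L := q*(x-X)+p*(y-Y)) in *; set (D := x^2+y^2-X^2-Y^2) in *.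
  clearbody L D.
  assert (Hdiv : (c1 | c2 * (2*L))).
  { exists (q*D). rewrite Z.mul_assoc, (Z.mul_comm c2 2), <- R. ring. }
  apply Z.gauss in Hdiv; [|exact hgcd].
  rewrite <- (Z.abs_eq 2), <- Z.abs_mul by lia.
  apply Zdivide_bounds; [exact Hdiv | lia].
Qed.

(* c2 divides q D, hence is bounded by it when D is nonzero. *)
Lemma c2_le_chord x y X Y :
  scaled_circle p q c1 c2 c3 x y -> scaled_circle p q c1 c2 c3 X Y ->
  x^2+y^2-X^2-Y^2 <> 0 ->
  Z.abs c2 <= Z.abs q * Z.abs (x^2+y^2-X^2-Y^2).
Proof.
  intros E1 E2 hD.
  pose proof (chord_relation x y X Y E1 E2) as R; clear E1 E2.
  set (L := q*(x-X)+p*(y-Y)) in *; set (D := x^2+y^2-X^2-Y^2) in *.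
  clearbody L D.
  assert (Hdiv : (c2 | c1 * (q*D))).
  { exists (2*L). rewrite Z.mul_assoc, (Z.mul_comm c1 q), R. ring. }
  apply Z.gauss in Hdiv; [|rewrite Z.gcd_comm; exact hgcd].
  rewrite <- Z.abs_mul.
  apply Zdivide_bounds; [exact Hdiv | now apply Z.neq_mul_0].
Qed.

(* Eliminating the centre: with D and L as above, the vector
   (2 L x - D q, 2 L y - D p) is 2 L c1 times P minus the centre, so its
   squared length is 4 L^2 c3 / c1^2, and it factors as a product of
   the squared chord length and of ((q (y+Y) - p (x+X))^2 + L^2).  Since
   c1^2 <= 4 L^2 this bounds c3. *)
Lemma c3_le_chord x y X Y :
  scaled_circle p q c1 c2 c3 x y -> scaled_circle p q c1 c2 c3 X Y ->
  q*(x-X)+p*(y-Y) <> 0 ->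
  c3 <= ((x-X)^2+(y-Y)^2)*((q*(y+Y)-p*(x+X))^2+(q*(x-X)+p*(y-Y))^2).
Proof.
  intros E1 E2 hL.
  pose proof (chord_relation x y X Y E1 E2) as R.
  pose proof (c1_le_chord x y X Y E1 E2 hL) as Bc1.
  set (L := q*(x-X)+p*(y-Y)) in *; set (D := x^2+y^2-X^2-Y^2) in *.
  assert (Hfactor : ((x-X)^2+(y-Y)^2)*((q*(y+Y)-p*(x+X))^2+L^2)
                    = (2*L*x-D*q)^2+(2*L*y-D*p)^2) by (unfold L, D; ring).
  rewrite Hfactor.
  assert (Hcentre : q^2 * (4*L^2*c3) = q^2 * (c1^2 * ((2*L*x-D*q)^2+(2*L*y-D*p)^2))).
  { unfold scaled_circle in E1.
    transitivity (4*L^2*(q^2*c3)); [ring|]. rewrite <- E1.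
    transitivity ((2*L*(q*c1*x) - q*(2*c2*L))^2 + (2*L*(q*c1*y) - p*(2*c2*L))^2); [ring|].
    rewrite <- R; ring. }
  apply Z.mul_reg_l in Hcentre; [|now apply Z.pow_nonzero].
  set (W := (2*L*x-D*q)^2+(2*L*y-D*p)^2) in *.
  assert (W_nonneg : 0 <= W)
    by (unfold W; apply Z.add_nonneg_nonneg; apply Z.pow_even_nonneg; now exists 1).
  clearbody W L D; clear E1 E2 R.
  assert (Hc1sq : c1^2 <= 4*L^2).
  { rewrite !Z.pow_2_r, <- (Z.abs_square c1), <- (Z.abs_square L).
    pose proof (Z.mul_le_mono_nonneg _ _ _ _ (Z.abs_nonneg c1) Bc1 (Z.abs_nonneg c1) Bc1).
    lia. }
  assert (L_sq_pos : 0 < L^2) by (clear - hL; nia).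
  assert (Hscaled : 4*L^2*c3 <= 4*L^2*W)
    by (rewrite Hcentre; apply Z.mul_le_mono_nonneg_r; lia).
  apply (Z.mul_le_mono_pos_l _ _ (4*L^2)); [clear - L_sq_pos; lia | exact Hscaled].
Qed.

End Chord.

(* If a chord P1 P2 has L = 0 and D = 0, it is orthogonal both to (q,p) and
   to P1 + P2, so P1 + P2 is parallel to (q,p). *)
Lemma chord_sum_parallel p q x1 y1 x2 y2 : (x1,y1) <> (x2,y2) ->
  q*(x1-x2)+p*(y1-y2) = 0 -> x1^2+y1^2-x2^2-y2^2 = 0 ->
  q*(y1+y2) - p*(x1+x2) = 0.
Proof.
  intros hne hL hD.
  assert (Ax : (q*(y1+y2) - p*(x1+x2)) * (x1-x2) = 0).
  { transitivity ((q*(x1-x2)+p*(y1-y2))*(y1+y2) - (x1^2+y1^2-x2^2-y2^2)*p); [ring|].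
    rewrite hL, hD; ring. }
  assert (Ay : (q*(y1+y2) - p*(x1+x2)) * (y1-y2) = 0).
  { transitivity ((x1^2+y1^2-x2^2-y2^2)*q - (q*(x1-x2)+p*(y1-y2))*(x1+x2)); [ring|].
    rewrite hL, hD; ring. }
  apply Z.mul_eq_0 in Ax as [Ax|Ax]; [exact Ax|].
  apply Z.mul_eq_0 in Ay as [Ay|Ay]; [exact Ay|].
  exfalso; apply hne; f_equal; lia.
Qed.

Lemma transversal_chord p q c1 c2 c3 x1 y1 x2 y2 x3 y3 : 0 < q -> c1 <> 0 ->
  (x1,y1) <> (x2,y2) -> (x1,y1) <> (x3,y3) -> (x2,y2) <> (x3,y3) ->
  scaled_circle p q c1 c2 c3 x1 y1 -> scaled_circle p q c1 c2 c3 x2 y2 ->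
  scaled_circle p q c1 c2 c3 x3 y3 ->
  q*(x1-x2)+p*(y1-y2) <> 0 \/ q*(x1-x3)+p*(y1-y3) <> 0.
Proof.
  intros hq hc1 n12 n13 n23 E1 E2 E3.
  destruct (Z.eq_dec (q*(x1-x2)+p*(y1-y2)) 0) as [L12|]; [|now left].
  destruct (Z.eq_dec (q*(x1-x3)+p*(y1-y3)) 0) as [L13|]; [|now right].
  exfalso.
  assert (hq0 : q <> 0) by lia.
  pose proof (chord_equal_norms p q c1 c2 c3 hq0 hc1 x1 y1 x2 y2 E1 E2 L12) as D12.
  pose proof (chord_equal_norms p q c1 c2 c3 hq0 hc1 x1 y1 x3 y3 E1 E3 L13) as D13.
  pose proof (chord_sum_parallel p q x1 y1 x2 y2 n12 L12 D12) as S12.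
  pose proof (chord_sum_parallel p q x1 y1 x3 y3 n13 L13 D13) as S13.
  (* P2 - P3 is orthogonal to (q,p) and parallel to it, hence zero. *)
  assert (Hx : (q*q+p*p)*(x2-x3) = 0).
  { transitivity (q*((q*(x1-x3)+p*(y1-y3)) - (q*(x1-x2)+p*(y1-y2)))
                  - p*((q*(y1+y2) - p*(x1+x2)) - (q*(y1+y3) - p*(x1+x3)))); [ring|].
    rewrite L12, L13, S12, S13; ring. }
  apply Z.mul_eq_0 in Hx as [Hx|Hx]; [clear - hq Hx; nia|].
  assert (Ex : x2 = x3) by (clear - Hx; lia); subst x3.
  assert (Hy : q*(y2-y3) = 0) by (clear - S12 S13; lia).
  apply Z.mul_eq_0 in Hy as [Hy|Hy]; [lia|].
  apply n23; f_equal; clear - Hy; lia.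
Qed.

Local Open Scope R_scope.

Lemma weighted_cauchy_schwarz q p a b : 0 <= q ->
  (q*a + p*b)^2 <= (q + Rabs p)*(q*a^2 + Rabs p*b^2).
Proof.
  intros hq. unfold Rabs; destruct (Rcase_abs p).
  - assert (0 <= q*(-p)*(a+b)^2) by (apply Rmult_le_pos; [nra | apply pow2_ge_0]). nra.
  - assert (0 <= q*p*(a-b)^2) by (apply Rmult_le_pos; [nra | apply pow2_ge_0]). nra.
Qed.

(* AM-GM: the product equals (a + 2 H^2)^2 - (b - 2 H^2)^2 <= (6 H^2)^2. *)
Lemma product_le_amgm a b H : 0 <= a <= 4*H^2 ->
  (a+b)*(4*H^2+a-b) <= 36*H^4.
Proof.
  intros ha.
  assert (Hsq : (a+b)*(4*H^2+a-b) = (a+2*H^2)^2 - (b-2*H^2)^2) by ring.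
  pose proof (pow2_ge_0 (b-2*H^2)). pose proof (pow2_ge_0 H).
  assert ((a+2*H^2)^2 <= (6*H^2)^2) by (apply pow_incr; lra).
  replace (36*H^4) with ((6*H^2)^2) by ring.
  lra.
Qed.

Lemma chord_product_bound H q p x y X Y : 0 <= q ->
  x^2 <= H^2 -> y^2 <= H^2 -> X^2 <= H^2 -> Y^2 <= H^2 ->
  ((x-X)^2+(y-Y)^2)*((q*(y+Y)-p*(x+X))^2+(q*(x-X)+p*(y-Y))^2)
   <= 36*(q+Rabs p)^2*H^4.
Proof.
  intros hq bx by' bX bY.
  set (P := Rabs p). assert (hP : 0 <= P) by apply Rabs_pos.
  pose proof (weighted_cauchy_schwarz q p (y+Y) (-(x+X)) hq) as CSsum.
  pose proof (weighted_cauchy_schwarz q p (x-X) (y-Y) hq) as CSdiff.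
  fold P in CSsum, CSdiff.
  (* |P + P'|^2 + |P - P'|^2 = 2 (|P|^2 + |P'|^2), coordinatewise. *)
  assert (ex : (x+X)^2 + (x-X)^2 <= 4*H^2) by nra.
  assert (ey : (y+Y)^2 + (y-Y)^2 <= 4*H^2) by nra.
  set (a := (x-X)^2) in *; set (b := (y-Y)^2) in *.
  assert (a0 : 0 <= a) by apply pow2_ge_0. assert (b0 : 0 <= b) by apply pow2_ge_0.
  pose proof (pow2_ge_0 (x+X)). pose proof (pow2_ge_0 (y+Y)).
  assert (Hsecond : (q*(y+Y)-p*(x+X))^2+(q*(x-X)+p*(y-Y))^2
                    <= (q+P)*(q*(4*H^2-b+a) + P*(4*H^2-a+b))).
  { replace (q*(y+Y)-p*(x+X)) with (q*(y+Y)+p*(-(x+X))) by ring.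
    replace ((-(x+X))^2) with ((x+X)^2) in CSsum by ring.
    assert (0 <= (q+P)*q) by nra. assert (0 <= (q+P)*P) by nra. nra. }
  apply Rle_trans with ((a+b)*((q+P)*(q*(4*H^2-b+a) + P*(4*H^2-a+b)))).
  { apply Rmult_le_compat_l; lra. }
  pose proof (product_le_amgm a b H ltac:(lra)).
  pose proof (product_le_amgm b a H ltac:(lra)).
  replace ((a+b)*((q+P)*(q*(4*H^2-b+a) + P*(4*H^2-a+b)))) with
    ((q+P)*(q*((a+b)*(4*H^2+a-b)) + P*((b+a)*(4*H^2+b-a)))) by ring.
  replace (36*(q+P)^2*H^4) with ((q+P)*(q*(36*H^4) + P*(36*H^4))) by ring.
  apply Rmult_le_compat_l; [lra|].
  apply Rplus_le_compat; apply Rmult_le_compat_l; lra.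
Qed.

Ltac push_IZR :=
  repeat rewrite ?Z.pow_2_r, ?plus_IZR, ?minus_IZR, ?mult_IZR, ?abs_IZR.

Lemma on_circle_scaled p q c1 c2 c3 x y : (0 < q)%Z ->
  on_circle (IZR p / IZR q) c1 c2 c3 x y -> scaled_circle p q c1 c2 c3 x y.
Proof.
  intros hq E. unfold on_circle in E. unfold scaled_circle. apply eq_IZR.
  push_IZR.
  assert (IZR q <> 0) by (apply not_0_IZR; lia).
  rewrite <- E. field. assumption.
Qed.

Lemma slope_weight p q : (0 < q)%Z ->
  IZR q * (1 + Rabs (IZR p / IZR q)) = IZR q + Rabs (IZR p).
Proof.
  intros hq. assert (0 < IZR q) by (apply IZR_lt; lia).
  unfold Rdiv. rewrite Rabs_mult, Rabs_inv, (Rabs_pos_eq (IZR q)) by lra.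
  field. lra.
Qed.

Lemma box_difference H u v : Rabs u <= H -> Rabs v <= H -> Rabs (u - v) <= 2*H.
Proof.
  intros hu hv. unfold Rminus.
  pose proof (Rabs_triang u (-v)). rewrite Rabs_Ropp in *. lra.
Qed.

Lemma box_square H u : Rabs u <= H -> u^2 <= H^2.
Proof. apply pow_maj_Rabs. Qed.

Section BoxBounds.

Variables (H : R) (p q c1 c2 c3 x y X Y : Z).
Hypothesis hq : (0 < q)%Z.
Hypothesis hc1 : c1 <> 0%Z.
Hypothesis hgcd : Z.gcd c1 c2 = 1%Z.
Hypothesis hbox : in_box H x y.
Hypothesis hbox' : in_box H X Y.
Hypothesis E1 : scaled_circle p q c1 c2 c3 x y.
Hypothesis E2 : scaled_circle p q c1 c2 c3 X Y.
Hypothesis hL : (q*(x-X)+p*(y-Y) <> 0)%Z.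

(* |c1| <= 2 |L| <= 2 (q + |p|) 2H. *)
Lemma c1_box_bound : Rabs (IZR c1) <= 4 * (IZR q + Rabs (IZR p)) * H.
Proof.
  destruct hbox as [bx by']; destruct hbox' as [bX bY].
  assert (hqR : 0 < IZR q) by (apply IZR_lt; lia).
  pose proof (c1_le_chord p q c1 c2 c3 ltac:(lia) hc1 hgcd x y X Y E1 E2 hL) as B.
  apply IZR_le in B; revert B; push_IZR; intro B.
  pose proof (box_difference H _ _ bx bX). pose proof (box_difference H _ _ by' bY).
  pose proof (Rabs_triang (IZR q * (IZR x - IZR X)) (IZR p * (IZR y - IZR Y))).
  rewrite !Rabs_mult, (Rabs_pos_eq (IZR q)) in * by lra.
  pose proof (Rabs_pos (IZR p)). nra.
Qed.

(* |c2| <= q |D| <= 2 q H^2, the case c2 = 0 being trivial. *)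
Lemma c2_box_bound : Rabs (IZR c2) <= 2 * IZR q * H ^ 2.
Proof.
  destruct hbox as [bx by']; destruct hbox' as [bX bY].
  assert (hqR : 0 < IZR q) by (apply IZR_lt; lia).
  destruct (Z.eq_dec c2 0) as [->|hc2]; [rewrite Rabs_R0; nra|].
  pose proof (chord_distinct_norms p q c1 c2 c3 ltac:(lia) hc1 x y X Y hc2 E1 E2 hL) as hD.
  pose proof (c2_le_chord p q c1 c2 c3 ltac:(lia) hc1 hgcd x y X Y E1 E2 hD) as B.
  apply IZR_le in B. rewrite mult_IZR, !abs_IZR, (Rabs_pos_eq (IZR q)) in B by lra.
  assert (HD : Rabs (IZR (x^2+y^2-X^2-Y^2)) <= 2*H^2).
  { push_IZR. apply Rabs_le.
    pose proof (box_square H _ bx). pose proof (box_square H _ by').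
    pose proof (box_square H _ bX). pose proof (box_square H _ bY).
    split; nra. }
  nra.
Qed.

(* c3 <= |P - P'|^2 ((q (y+Y) - p (x+X))^2 + L^2) <= 36 (q + |p|)^2 H^4. *)
Lemma c3_box_bound : IZR c3 <= 36 * (IZR q + Rabs (IZR p))^2 * H^4.
Proof.
  destruct hbox as [bx by']; destruct hbox' as [bX bY].
  assert (hqR : 0 <= IZR q) by (apply IZR_le; lia).
  pose proof (c3_le_chord p q c1 c2 c3 ltac:(lia) hc1 hgcd x y X Y E1 E2 hL) as B.
  apply IZR_le in B.
  eapply Rle_trans; [exact B|].
  eapply Rle_trans;
    [|exact (chord_product_bound H (IZR q) (IZR p) (IZR x) (IZR y) (IZR X) (IZR Y)
               hqR (box_square H _ bx) (box_square H _ by')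
               (box_square H _ bX) (box_square H _ bY))].
  right. push_IZR. ring.
Qed.

Lemma bounds_from_chord :
  let m := IZR p / IZR q in
  Rabs (IZR c1) <= 4 * IZR q * (1 + Rabs m) * H /\
  Rabs (IZR c2) <= 2 * IZR q * H ^ 2 /\
  IZR c3 <= 36 * IZR q ^ 2 * (1 + Rabs m) ^ 2 * H ^ 4.
Proof.
  intros m.
  pose proof (slope_weight p q hq) as Hweight; fold m in Hweight.
  replace (4 * IZR q * (1 + Rabs m) * H) with (4 * (IZR q + Rabs (IZR p)) * H)
    by (rewrite <- Hweight; ring).
  replace (36 * IZR q ^ 2 * (1 + Rabs m) ^ 2 * H ^ 4)
    with (36 * (IZR q + Rabs (IZR p))^2 * H^4) by (rewrite <- Hweight; ring).
  exact (conj c1_box_bound (conj c2_box_bound c3_box_bound)).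
Qed.

End BoxBounds.

Theorem proposition1 (H : R) (p q c1 c2 c3 : Z)
  (hH : 1 <= H) (hq : (0 < q)%Z)
  (hc1 : c1 <> 0%Z) (hc3 : (0 <= c3)%Z) (hcop : coprime_pair c1 c2)
  (h3 : exists (x1 y1 x2 y2 x3 y3 : Z),
      (x1, y1) <> (x2, y2) /\ (x1, y1) <> (x3, y3) /\ (x2, y2) <> (x3, y3) /\
      in_box H x1 y1 /\ in_box H x2 y2 /\ in_box H x3 y3 /\
      on_circle (IZR p / IZR q) c1 c2 c3 x1 y1 /\
      on_circle (IZR p / IZR q) c1 c2 c3 x2 y2 /\
      on_circle (IZR p / IZR q) c1 c2 c3 x3 y3) :
  let m := IZR p / IZR q in
  Rabs (IZR c1) <= 4 * IZR q * (1 + Rabs m) * H /\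
  Rabs (IZR c2) <= 2 * IZR q * H ^ 2 /\
  IZR c3 <= 36 * IZR q ^ 2 * (1 + Rabs m) ^ 2 * H ^ 4.
Proof.
  destruct h3 as (x1 & y1 & x2 & y2 & x3 & y3 & n12 & n13 & n23 & b1 & b2 & b3 & o1 & o2 & o3).
  apply (on_circle_scaled _ _ _ _ _ _ _ hq) in o1, o2, o3.
  assert (hgcd : Z.gcd c1 c2 = 1%Z).
  { destruct hcop as [[[-> ->]|[-> ->]]|(_ & _ & g)]; [reflexivity|contradiction|exact g]. }
  destruct (transversal_chord p q c1 c2 c3 x1 y1 x2 y2 x3 y3 hq hc1 n12 n13 n23 o1 o2 o3)
    as [hL|hL].
  - exact (bounds_from_chord H p q c1 c2 c3 x1 y1 x2 y2 hq hc1 hgcd b1 b2 o1 o2 hL).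
  - exact (bounds_from_chord H p q c1 c2 c3 x1 y1 x3 y3 hq hc1 hgcd b1 b3 o1 o3 hL).
Qed.
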